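(* Let $m$ be a real number such that $\frac m2\notin\{0,-1,-2,\dots\}$ and let $d(z,n)=\frac{z^n}{\frac m2(\frac m2+1)\cdots(\frac m2+n-1)}=\frac{z^n\Gamma(\frac m2)}{\Gamma(\frac m2+n)}$ for $z\ge0$, $n\in\mathbb N$ (with $d(z,0)=1$). Then $\mathcal K^\alpha\rightarrow^dK^\alpha$ for each $\alpha\in\{+,-,0\}$. As a consequence, every element of the algebra generated by $\mathcal K^+,\mathcal K^-,\mathcal K^0$ is dual, with duality function $d$, to the element of the algebra generated by $K^+,K^-,K^0$ obtained by replacing each operator $\mathcal K^\alpha$ by $K^\alpha$ and reversing the order of products.
   Context: $\mathbb N=\{0,1,2,\dots\}$. On smooth functions $f:[0,\infty)\to\mathbb R$: $\mathcal K^+f(z)=zf(z)$, $\mathcal K^-f(z)=zf''(z)+\frac m2f'(z)$, $\mathcal K^0f(z)=zf'(z)+\frac m4f(z)$. On functions $f:\mathbb N\to\mathbb R$: $K^+f(n)=(\frac m2+n)f(n+1)$, $K^-f(n)=nf(n-1)$, $K^0f(n)=(\frac m4+n)f(n)$. Left/right actions: $(\mathcal K_ld)(z,n)=(\mathcal Kd(\cdot,n))(z)$, $(K_rd)(z,n)=(Kd(z,\cdot))(n)$; $\mathcal K\rightarrow^dK$ means $\mathcal K_ld=K_rd$. *)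

From Stdlib Require Import Reals List.
From Coquelicot Require Import Coquelicot.
Open Scope R_scope.

Fixpoint poch (a : R) (n : nat) : R :=
  match n with
  | O => 1
  | S k => poch a k * (a + INR k)
  end.

Definition dual_fun (m : R) (z : R) (n : nat) : R := z ^ n / poch (m / 2) n.

Definition Kc_plus (m : R) (f : R -> R) (z : R) : R := z * f z.
Definition Kc_minus (m : R) (f : R -> R) (z : R) : R :=
  z * Derive (Derive f) z + m / 2 * Derive f z.
Definition Kc_zero (m : R) (f : R -> R) (z : R) : R :=
  z * Derive f z + m / 4 * f z.

Definition Kd_plus (m : R) (f : nat -> R) (n : nat) : R := (m / 2 + INR n) * f (S n).
Definition Kd_minus (m : R) (f : nat -> R) (n : nat) : R :=
  INR n * f (Nat.pred n).   (* n = 0 gives 0 * f 0 = 0 *)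
Definition Kd_zero (m : R) (f : nat -> R) (n : nat) : R := (m / 4 + INR n) * f n.

Definition act_l (K : (R -> R) -> R -> R) (D : R -> nat -> R) (z : R) (n : nat) : R :=
  K (fun y => D y n) z.
Definition act_r (K : (nat -> R) -> nat -> R) (D : R -> nat -> R) (z : R) (n : nat) : R :=
  K (D z) n.

Definition dual_rel (K : (R -> R) -> R -> R) (K' : (nat -> R) -> nat -> R)
  (D : R -> nat -> R) : Prop :=
  forall (z : R) (n : nat), 0 <= z -> act_l K D z n = act_r K' D z n.

Inductive gen := Gplus | Gminus | Gzero.

Definition Kc (m : R) (a : gen) : (R -> R) -> R -> R :=
  match a with Gplus => Kc_plus m | Gminus => Kc_minus m | Gzero => Kc_zero m end.
Definition Kd (m : R) (a : gen) : (nat -> R) -> nat -> R :=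
  match a with Gplus => Kd_plus m | Gminus => Kd_minus m | Gzero => Kd_zero m end.

(* A word [a1; ...; ak] denotes the product K^{a1} K^{a2} ... K^{ak}
   (composition: ak is applied first). *)
Fixpoint Kc_word (m : R) (w : list gen) (f : R -> R) : R -> R :=
  match w with nil => f | a :: w' => Kc m a (Kc_word m w' f) end.
Fixpoint Kd_word (m : R) (w : list gen) (f : nat -> R) : nat -> R :=
  match w with nil => f | a :: w' => Kd m a (Kd_word m w' f) end.

(* An element of the algebra generated by the K^alpha: a finite real linear
   combination of words, sum_i c_i * (word w_i). *)
Definition alg_elt := list (R * list gen).

Fixpoint Kc_alg (m : R) (p : alg_elt) (f : R -> R) (z : R) : R :=
  match p with
  | nil => 0
  | (c, w) :: p' => c * Kc_word m w f z + Kc_alg m p' f z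
  end.

Fixpoint Kd_alg_rev (m : R) (p : alg_elt) (f : nat -> R) (n : nat) : R :=
  match p with
  | nil => 0
  | (c, w) :: p' => c * Kd_word m (rev w) f n + Kd_alg_rev m p' f n
  end.

(* The duality function is a monomial z^n normalised by a Pochhammer symbol, so each continuous
   generator acts on it through the elementary identities (z^n)' = n z^(n-1) and
   (m/2)_(n+1) = (m/2)_n (m/2 + n). Once the three generators are dual, words follow by induction:
   a continuous operator acting in z commutes with discrete operators acting in n, which is why
   the order of products gets reversed. *)
From Stdlib Require Import Reals List Lra FunctionalExtensionality.
From Coquelicot Require Import Coquelicot.
Open Scope R_scope.

Lemma poch_neq0 (a : R) (n : nat) : (forall k : nat, a <> - INR k) -> poch a n <> 0.
Proof.
  intro ha; induction n as [|n IH]; simpl; [lra|].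
  apply Rmult_integral_contrapositive; split; [exact IH|].
  intro H; apply (ha n); lra.
Qed.

Lemma Derive_scal_pow (c : R) (n : nat) :
  Derive (fun y => c * y ^ n) = fun y => c * INR n * y ^ pred n.
Proof.
  apply functional_extensionality; intro y.
  apply is_derive_unique; auto_derive; [easy|ring].
Qed.

Lemma mul_pow_pred (z : R) (n : nat) : INR n * (z * z ^ pred n) = INR n * z ^ n.
Proof. destruct n; simpl; ring. Qed.

Section DualFun.

Variable m : R.
Hypothesis hm : forall k : nat, m / 2 <> - INR k.

Let poch_m_neq0 (n : nat) : poch (m / 2) n <> 0 := poch_neq0 (m / 2) n hm.

Let shift_neq0 (n : nat) : m / 2 + INR n <> 0.
Proof. intro H; apply (hm n); lra. Qed.

Lemma dual_fun_monomial (n : nat) :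
  (fun y => dual_fun m y n) = fun y => / poch (m / 2) n * y ^ n.
Proof. apply functional_extensionality; intro y; unfold dual_fun, Rdiv; ring. Qed.

Lemma dual_Kc_plus (z : R) (n : nat) :
  act_l (Kc_plus m) (dual_fun m) z n = act_r (Kd_plus m) (dual_fun m) z n.
Proof.
  unfold act_l, act_r, Kc_plus, Kd_plus, dual_fun; simpl.
  pose proof (poch_m_neq0 n); pose proof (shift_neq0 n).
  set (p := poch (m / 2) n) in *; set (s := m / 2 + INR n) in *.
  field; split; assumption.
Qed.

Lemma dual_Kc_zero (z : R) (n : nat) :
  act_l (Kc_zero m) (dual_fun m) z n = act_r (Kd_zero m) (dual_fun m) z n.
Proof.
  unfold act_l, act_r, Kc_zero, Kd_zero.
  rewrite dual_fun_monomial, Derive_scal_pow; unfold dual_fun.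
  set (p := poch (m / 2) n).
  transitivity (/ p * (m / 4 * z ^ n + INR n * (z * z ^ pred n))); [unfold Rdiv; ring|].
  rewrite mul_pow_pred; unfold Rdiv; ring.
Qed.

Lemma dual_Kc_minus (z : R) (n : nat) :
  act_l (Kc_minus m) (dual_fun m) z n = act_r (Kd_minus m) (dual_fun m) z n.
Proof.
  unfold act_l, act_r, Kc_minus, Kd_minus.
  rewrite dual_fun_monomial, !Derive_scal_pow; unfold dual_fun.
  destruct n as [|n]; [simpl; ring|].
  simpl pred; simpl poch.
  pose proof (poch_m_neq0 n); pose proof (shift_neq0 n).
  set (p := poch (m / 2) n) in *; set (s := m / 2 + INR n) in *.
  transitivity (INR (S n) / (p * s) * (INR n * (z * z ^ pred n) + m / 2 * z ^ n));
    [unfold Rdiv; ring|].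
  rewrite mul_pow_pred, S_INR.
  replace (INR n) with (s - m / 2) by (unfold s; ring).
  field; split; assumption.
Qed.

Lemma dual_Kc (a : gen) (z : R) (n : nat) :
  act_l (Kc m a) (dual_fun m) z n = act_r (Kd m a) (dual_fun m) z n.
Proof.
  destruct a; [apply dual_Kc_plus | apply dual_Kc_minus | apply dual_Kc_zero].
Qed.

End DualFun.

Lemma Kc_scal (m : R) (a : gen) (c : R) (f : R -> R) (z : R) :
  Kc m a (fun y => c * f y) z = c * Kc m a f z.
Proof.
  destruct a; simpl; unfold Kc_plus, Kc_minus, Kc_zero; [ring| |].
  - rewrite Derive_scal.
    replace (Derive (fun y => c * f y)) with (fun y => c * Derive f y)
      by (apply functional_extensionality; intro; now rewrite Derive_scal).
    rewrite Derive_scal; ring.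
  - rewrite Derive_scal; ring.
Qed.

(* Discrete operators only multiply values by coefficients depending on n, while Kc is linear. *)
Lemma Kc_Kd_word_comm (m : R) (a : gen) (w : list gen) (D : R -> nat -> R) (z : R) (n : nat) :
  Kc m a (fun y => Kd_word m w (D y) n) z =
  Kd_word m w (fun k => Kc m a (fun y => D y k) z) n.
Proof.
  revert n; induction w as [|b w IH]; intro n; [reflexivity|].
  destruct b; simpl; unfold Kd_plus, Kd_minus, Kd_zero; now rewrite Kc_scal, IH.
Qed.

Lemma Kd_word_cat (m : R) (w1 w2 : list gen) (f : nat -> R) :
  Kd_word m (w1 ++ w2) f = Kd_word m w1 (Kd_word m w2 f).
Proof. induction w1 as [|b w1 IH]; simpl; [reflexivity|now rewrite IH]. Qed.

Section Words.

Variables (m : R) (D : R -> nat -> R).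
Hypothesis D_dual : forall a z n, act_l (Kc m a) D z n = act_r (Kd m a) D z n.

Lemma Kc_word_dual (w : list gen) (z : R) (n : nat) :
  act_l (Kc_word m w) D z n = act_r (Kd_word m (rev w)) D z n.
Proof.
  unfold act_l, act_r; revert z n; induction w as [|a w IH]; intros z n; [reflexivity|].
  simpl; rewrite Kd_word_cat.
  replace (Kc_word m w (fun y => D y n)) with (fun y => Kd_word m (rev w) (D y) n)
    by (apply functional_extensionality; intro; now rewrite IH).
  rewrite Kc_Kd_word_comm; f_equal.
  apply functional_extensionality; intro k.
  exact (D_dual a z k).
Qed.

Lemma Kc_alg_dual (p : alg_elt) (z : R) (n : nat) :
  act_l (Kc_alg m p) D z n = act_r (Kd_alg_rev m p) D z n.
Proof.
  unfold act_l, act_r.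
  induction p as [|[c w] p IH]; simpl; [reflexivity|].
  rewrite IH; f_equal; f_equal; apply Kc_word_dual.
Qed.

End Words.

Theorem proposition5p2 (m : R)
  (hm : forall k : nat, m / 2 <> - INR k) :
  dual_rel (Kc_plus m) (Kd_plus m) (dual_fun m) /\
  dual_rel (Kc_minus m) (Kd_minus m) (dual_fun m) /\
  dual_rel (Kc_zero m) (Kd_zero m) (dual_fun m) /\
  (forall p : alg_elt, dual_rel (Kc_alg m p) (Kd_alg_rev m p) (dual_fun m)).
Proof.
  split; [|split; [|split]].
  - intros z n _; exact (dual_Kc m hm Gplus z n).
  - intros z n _; exact (dual_Kc m hm Gminus z n).
  - intros z n _; exact (dual_Kc m hm Gzero z n).
  - intros p z n _; exact (Kc_alg_dual m (dual_fun m) (dual_Kc m hm) p z n).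
Qed.
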